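(* There is an absolute constant $c>0$ such that for every (nondegenerate) hyperbolic triangle $T$ with height $h$, the area of $T$ is at least $c\cdot\min(1,h^2)$.
   Context: The hyperbolic plane is the complete simply connected Riemannian surface of constant curvature $-1$. The height of a hyperbolic triangle is the minimum, over its three vertices, of the hyperbolic distance from the vertex to the opposite side. *)

(* Hyperbolic plane modelled by the Beltrami-Klein disk. *)
From HB Require Import structures.
From mathcomp Require Import all_boot all_order all_algebra.
From mathcomp Require Import all_classical all_reals all_analysis.
Set Implicit Arguments. Unset Strict Implicit. Unset Printing Implicit Defensive.
Import Order.TTheory GRing.Theory Num.Theory.
Local Open Scope classical_set_scope.
Local Open Scope ring_scope.

Section Klein.
Variable R : realType.
Definition pt := (R * R)%type.

Definition dot (p q : pt) : R := p.1 * q.1 + p.2 * q.2.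
Definition nrm2 (p : pt) : R := dot p p.

Definition in_disk (p : pt) : Prop := nrm2 p < 1.

Definition arcosh (x : R) : R := ln (x + Num.sqrt (x ^+ 2 - 1)).

Definition hdist (p q : pt) : R :=
  arcosh ((1 - dot p q) / Num.sqrt ((1 - nrm2 p) * (1 - nrm2 q))).

Definition comb3 (a b c : R) (A B C : pt) : pt :=
  (a * A.1 + b * B.1 + c * C.1, a * A.2 + b * B.2 + c * C.2).

(* geodesic segment [B,C]: Klein geodesics are Euclidean chords *)
Definition hsegment (B C : pt) : set pt :=
  [set comb3 t (1 - t) 0 B C B | t in `[0, 1]%classic].

Definition htriangle (A B C : pt) : set pt :=
  [set P | exists a b c : R, [/\ 0 <= a, 0 <= b, 0 <= c, a + b + c = 1
                              & P = comb3 a b c A B C]].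

(* nondegenerate: vertices not on a common geodesic (= not collinear) *)
Definition noncollinear (A B C : pt) : Prop :=
  (B.1 - A.1) * (C.2 - A.2) - (B.2 - A.2) * (C.1 - A.1) != 0.

Definition hdist_set (P : pt) (S : set pt) : R := inf [set hdist P X | X in S].

Definition height (A B C : pt) : R :=
  Num.min (hdist_set A (hsegment B C))
          (Num.min (hdist_set B (hsegment C A)) (hdist_set C (hsegment A B))).

(* hyperbolic area element of the Klein model: dx dy / (1 - x^2 - y^2)^(3/2) *)
Definition area_density (p : pt) : R :=
  (Num.sqrt (1 - nrm2 p) ^+ 3)^-1.

Definition harea (S : set pt) : \bar R :=
  (\int[((@lebesgue_measure R) \x (@lebesgue_measure R))%E]_(p in S)
      (area_density p)%:E)%E.
End Klein.

From HB Require Import structures.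
From mathcomp Require Import all_boot all_order all_algebra.
From mathcomp Require Import all_classical all_reals all_analysis.
From mathcomp Require Import ring lra.
Set Implicit Arguments. Unset Strict Implicit. Unset Printing Implicit Defensive.
Import Order.TTheory GRing.Theory Num.Theory.
Local Open Scope ring_scope.
Local Open Scope classical_set_scope.

(* In the Klein model, lifting points X to (X, 1) and using the
   Lorentzian product [ldot] of lifts turns hyperbolic trigonometry into polynomial
   algebra.  Put s := min 1 ((e^h - 1) / 2), where h is the height.  Every vertex is at
   distance >= h from all points of the opposite side, so sinh of that distance is >= s.
   The foot of the perpendicular from the vertex facing a longest side lies on that
   side, which gives sinh (distance to the side line) >= s for all three vertices.  An
   inequality between the hyperbolic cosines of the sides then shows that the point
   [lcenter] with barycentric weights (ldot B C, ldot C A, ldot A B) is at distance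
   >~ s / 5 from the three side lines.  Hence the triangle contains a parallelogram
   (in Klein coordinates) around that point, of hyperbolic radius about s / 10, whose
   area is at least (s / 10)^2 / 2; finally min 1 (h^2) <= 4 s^2. *)

Local Notation seg Y Z t := (comb3 t (1 - t) 0 Y Z Y).

Section RealFacts.
Variable R : realDomainType.
Implicit Types x y : R.

Lemma sqrD_le2 x y : (x + y) ^+ 2 <= 2 * (x ^+ 2 + y ^+ 2).
Proof. by have := sqr_ge0 (x - y); lra. Qed.

Lemma norm_le_of_sqr x y : 0 <= y -> x ^+ 2 <= y ^+ 2 -> `|x| <= y.
Proof. by move=> y0 h; rewrite -ler_sqr ?nnegrE ?normr_ge0 // real_normK ?num_real. Qed.

Lemma sqr_le_of_norm x y : `|x| <= y -> x ^+ 2 <= y ^+ 2.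
Proof.
move=> h; have y0 : 0 <= y by apply: le_trans h.
by rewrite -real_normK ?num_real // ler_sqr ?nnegrE ?normr_ge0.
Qed.

End RealFacts.

Lemma div_ge0_near (R : realFieldType) (x p D : R) :
  0 < p / D -> `|x - p| <= `|p| -> 0 <= x / D.
Proof.
move=> pD hx; have pn : p != 0 by apply/eqP => p0; move: pD; rewrite p0 mul0r ltxx.
have Dn : D != 0 by apply/eqP => D0; move: pD; rewrite D0 invr0 mulr0 ltxx.
have xp : 0 <= x * p.
  have : (x - p) ^+ 2 <= p ^+ 2.
    by move: hx; rewrite -ler_sqr ?nnegrE ?normr_ge0 // !real_normK ?num_real.
  by have := sqr_ge0 x; nra.
rewrite (_ : x / D = x * p / p ^+ 2 * (p / D)); last by field; rewrite Dn pn.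
by apply: mulr_ge0; [exact: divr_ge0 xp (sqr_ge0 p) | exact: ltW].
Qed.

(* Neither [D] nor [f] needs to be measurable: [m * \1_A] is a simple function below
   [f] on [D]. *)
Lemma cst_mul_measure_le_integral d (T : measurableType d) (R : realType)
  (mu : {measure set T -> \bar R}) (D A : set T) (f : T -> \bar R) (m : R) :
  measurable A -> 0 <= m -> (forall x, (0 <= f x)%E) ->
  (forall x, A x -> D x /\ (m%:E <= f x)%E) ->
  (m%:E * mu A <= \int[mu]_(x in D) f x)%E.
Proof.
move=> mA m0 f0 hA; rewrite ge0_integralE; last by move=> x _.
apply: ereal_sup_ubound => /=; exists (scale_nnsfun (indic_nnsfun R mA) m0).
  move=> x /=; rewrite /patch /measurable_realfun.mindic indicE.
  have [xA | xA] := boolP (x \in A).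
    have [Dx le] := hA x (set_mem xA).
    by rewrite ifT ?mulr1 //; apply/mem_set.
  by rewrite mulr0; case: ifP.
have := sintegralrM mu m (indic_nnsfun R mA).
by rewrite /= /measurable_realfun.mindic sintegral_indic => <-.
Qed.

Section Parallelogram.
Variable R : realType.

Definition parallelogram (x0 w k c0 b : R) : set (pt R) :=
  [set p | x0 - w <= p.1 <= x0 + w /\ c0 - b <= p.2 - k * p.1 <= c0 + b].

Lemma measurable_parallelogram (x0 w k c0 b : R) :
  measurable (parallelogram x0 w k c0 b).
Proof.
have -> : parallelogram x0 w k c0 b = (setT `&` fst @^-1` `[x0 - w, x0 + w]) `&`
    (setT `&` (fun p : pt R => p.2 - k * p.1) @^-1` `[c0 - b, c0 + b]).
  apply/seteqP; split => p /=.
    by move=> [h1 h2]; split; split => //; rewrite in_itv.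
  by move=> [[_ h1] [_ h2]]; move: h1 h2; rewrite !in_itv.
apply: measurableI; first by apply: measurable_fst => //; exact: measurable_itv.
have mg : measurable_fun setT (fun p : pt R => p.2 - k * p.1).
  apply: measurable_realfun.measurable_funB; first exact: measurable_snd.
  apply: measurable_realfun.measurable_funM; first exact: measurable_cst.
  exact: measurable_fst.
by apply: mg => //; exact: measurable_itv.
Qed.

Lemma parallelogram_measure (x0 w k c0 b : R) : 0 < w -> 0 < b ->
  (((2 * b) * (2 * w))%:E <=
    ((@lebesgue_measure R) \x (@lebesgue_measure R))%E (parallelogram x0 w k c0 b))%E.
Proof.
move=> w0 b0; rewrite /product_measure1 EFinM.
have -> : (2 * w)%:E = lebesgue_measure (`[x0 - w, x0 + w] : set R).
  by rewrite lebesgue_measure_itv /= lte_fin ifT; [congr (_%:E); lra | lra].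
apply: cst_mul_measure_le_integral; [exact: measurable_itv | lra | by move=> x; exact: measure_ge0 |].
move=> x; rewrite /= in_itv /= => hx; split => //.
have -> : xsection (parallelogram x0 w k c0 b) x = `[c0 - b + k * x, c0 + b + k * x].
  apply/seteqP; split => y /=; rewrite /xsection /= inE /parallelogram /= in_itv /=.
    by move=> [_ /andP[h1 h2]]; apply/andP; split; lra.
  by move=> /andP[h1 h2]; split => //; apply/andP; split; lra.
by rewrite lebesgue_measure_itv /= lte_fin ifT ?lee_fin; lra.
Qed.

End Parallelogram.

Section Lorentz.
Variable R : realType.
Implicit Types A B C P X Y Z : pt R.

(* The Lorentzian product of the lifts (X, 1) and (Y, 1):
   [cosh (hdist X Y) = ldot X Y / sqrt (ldot X X * ldot Y Y)]. *)
Definition ldot X Y : R := 1 - dot X Y.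

(* The determinant of the lifts of [A], [B], [C]; [noncollinear A B C] unfolds to
   [det3 A B C != 0]. *)
Definition det3 A B C : R :=
  (B.1 - A.1) * (C.2 - A.2) - (B.2 - A.2) * (C.1 - A.1).

Definition lgram B C : R := ldot B C ^+ 2 - ldot B B * ldot C C.

Lemma in_diskE X : in_disk X <-> 0 < ldot X X.
Proof. by rewrite /ldot subr_gt0. Qed.

Lemma ldot_gt0 X Y : in_disk X -> in_disk Y -> 0 < ldot X Y.
Proof.
rewrite /in_disk /ldot /nrm2 /dot; case: X => x1 x2; case: Y => y1 y2 /= hX hY.
have : 0 <= (x1 - y1) ^+ 2 + (x2 - y2) ^+ 2 by rewrite addr_ge0 // sqr_ge0.
nra.
Qed.

(* The reverse Cauchy-Schwarz inequality for timelike vectors. *)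
Lemma lgram_ge0 X Y : in_disk X -> in_disk Y -> 0 <= lgram X Y.
Proof.
rewrite /in_disk /lgram /ldot /nrm2 /dot.
case: X => x1 x2; case: Y => y1 y2 /= hX hY.
set d2 := (x1 - y1) ^+ 2 + (x2 - y2) ^+ 2; set cr := x1 * y2 - x2 * y1.
have -> : (1 - (x1 * y1 + x2 * y2)) ^+ 2 - (1 - (x1 * x1 + x2 * x2)) * (1 - (y1 * y1 + y2 * y2))
    = d2 - cr ^+ 2 by rewrite /d2 /cr; ring.
have lagrange : cr ^+ 2 <= d2 * (y1 * y1 + y2 * y2).
  rewrite -subr_ge0 (_ : _ - _ = ((x1 - y1) * y1 + (x2 - y2) * y2) ^+ 2) ?sqr_ge0 //.
  by rewrite /d2 /cr; ring.
have : d2 * (y1 * y1 + y2 * y2) <= d2 by rewrite ler_piMr ?addr_ge0 ?sqr_ge0 // ltW.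
by rewrite subr_ge0; lra.
Qed.

Lemma det3_rot A B C : det3 B C A = det3 A B C.
Proof. by rewrite /det3; ring. Qed.

Lemma det3_sqr A B C : det3 A B C ^+ 2 =
  ldot A A * ldot B B * ldot C C + 2 * ldot A B * ldot B C * ldot C A
  - ldot A A * ldot B C ^+ 2 - ldot B B * ldot C A ^+ 2 - ldot C C * ldot A B ^+ 2.
Proof. by rewrite /det3 /ldot /dot; ring. Qed.

Lemma det3_comb3 A B C (a b c : R) : a + b + c = 1 ->
  det3 (comb3 a b c A B C) B C = a * det3 A B C.
Proof. by move=> abc; rewrite (_ : c = 1 - a - b) /det3 /comb3 /=; [ring | lra]. Qed.

Lemma ldot_comb3 A B C (a b c : R) : a + b + c = 1 ->
  ldot (comb3 a b c A B C) (comb3 a b c A B C) =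
    a ^+ 2 * ldot A A + b ^+ 2 * ldot B B + c ^+ 2 * ldot C C
    + 2 * a * b * ldot A B + 2 * b * c * ldot B C + 2 * c * a * ldot C A.
Proof. by move=> abc; rewrite (_ : c = 1 - a - b) /ldot /dot /comb3 /=; [ring | lra]. Qed.

Lemma in_disk_segment Y Z (t : R) : in_disk Y -> in_disk Z -> 0 <= t <= 1 ->
  in_disk (seg Y Z t).
Proof.
move=> hY hZ /andP[t0 t1]; have hYZ := ldot_gt0 hY hZ.
move/in_diskE: hY; move/in_diskE: hZ => hZ hY.
apply/in_diskE; rewrite ldot_comb3; last by lra.
have : 0 <= t * (1 - t) * ldot Y Z by apply: mulr_ge0; [apply: mulr_ge0; lra | exact: ltW].
have [t0' | tn0] := eqVneq t 0; first by rewrite t0'; lra.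
have : 0 < t ^+ 2 * ldot Y Y by rewrite mulr_gt0 // exprn_gt0 // lt_neqAle eq_sym tn0.
have : 0 <= (1 - t) ^+ 2 * ldot Z Z by rewrite mulr_ge0 ?sqr_ge0 // ltW.
lra.
Qed.

End Lorentz.

Section Distance.
Variable R : realType.
Implicit Types A B C X Y Z : pt R.

Definition hcosh X Y : R := ldot X Y / Num.sqrt (ldot X X * ldot Y Y).

Lemma hdistE X Y : hdist X Y = arcosh (hcosh X Y).
Proof. by []. Qed.

Lemma sqrt_ldot_le X Y : in_disk X -> in_disk Y ->
  Num.sqrt (ldot X X * ldot Y Y) <= ldot X Y.
Proof.
move=> hX hY; rewrite -(ger0_norm (ltW (ldot_gt0 hX hY))) -sqrtr_sqr.
by rewrite ler_sqrt ?sqr_ge0 // -subr_ge0 lgram_ge0.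
Qed.

Lemma hcosh_ge1 X Y : in_disk X -> in_disk Y -> 1 <= hcosh X Y.
Proof.
move=> hX hY; rewrite /hcosh ler_pdivlMr ?mul1r ?sqrt_ldot_le //.
by rewrite sqrtr_gt0 mulr_gt0 // -in_diskE.
Qed.

Lemma hdist_ge0 X Y : in_disk X -> in_disk Y -> 0 <= hdist X Y.
Proof.
move=> hX hY; rewrite hdistE /arcosh; apply: ln_ge0.
by have := hcosh_ge1 hX hY; have := sqrtr_ge0 (hcosh X Y ^+ 2 - 1); lra.
Qed.

(* Uses [sinh d >= (expR d - 1) / 2]. *)
Lemma ldot_sqr_ge_hdist X Y (s : R) : in_disk X -> in_disk Y -> 0 <= s ->
  s <= (expR (hdist X Y) - 1) / 2 -> (1 + s ^+ 2) * (ldot X X * ldot Y Y) <= ldot X Y ^+ 2.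
Proof.
move=> hX hY s0; rewrite hdistE /arcosh.
set x := hcosh X Y; set r := Num.sqrt (x ^+ 2 - 1).
have x1 : 1 <= x by exact: hcosh_ge1.
have r0 : 0 <= r by exact: sqrtr_ge0.
have r2 : r ^+ 2 = x ^+ 2 - 1 by rewrite sqr_sqrtr // subr_ge0 expr_ge1 // (le_trans ler01).
rewrite lnK ?posrE; last by lra.
move=> hs; have rx : x - 1 <= r by nra.
have sr : s ^+ 2 <= r ^+ 2 by nra.
have XXYY0 : 0 < ldot X X * ldot Y Y by rewrite mulr_gt0 // -in_diskE.
have <- : x ^+ 2 * (ldot X X * ldot Y Y) = ldot X Y ^+ 2.
  by rewrite /x /hcosh expr_div_n sqr_sqrtr ?(ltW XXYY0) // divfK // gt_eqF.
by rewrite ler_pM2r //; lra.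
Qed.

Lemma hdist_set_segment_le X Y Z (t : R) : in_disk X -> in_disk Y -> in_disk Z ->
  0 <= t <= 1 -> hdist_set X (hsegment Y Z) <= hdist X (seg Y Z t).
Proof.
move=> hX hY hZ t01; apply: ge_inf.
  exists 0 => _ [_ [u u01 <-] <-]; apply: hdist_ge0 => //.
  by apply: in_disk_segment => //; move: u01; rewrite /= in_itv.
by exists (seg Y Z t) => //; exists t => //=; rewrite in_itv.
Qed.

Lemma hdist_set_segment_ge0 X Y Z : in_disk X -> in_disk Y -> in_disk Z ->
  0 <= hdist_set X (hsegment Y Z).
Proof.
move=> hX hY hZ; apply: lb_le_inf.
  exists (hdist X (seg Y Z 0)), (seg Y Z 0) => //.
  by exists 0 => //=; rewrite in_itv /= lexx ler01.
move=> _ [_ [u u01 <-] <-]; apply: hdist_ge0 => //.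
by apply: in_disk_segment => //; move: u01; rewrite /= in_itv.
Qed.

Lemma height_rot A B C : height B C A = height A B C.
Proof. by rewrite /height minA minC. Qed.

Lemma height_ge0 A B C : in_disk A -> in_disk B -> in_disk C -> 0 <= height A B C.
Proof. by move=> hA hB hC; rewrite !le_min !hdist_set_segment_ge0. Qed.

Lemma height_le_hdist A B C (t : R) : in_disk A -> in_disk B -> in_disk C ->
  0 <= t <= 1 -> height A B C <= hdist A (seg B C t).
Proof.
by move=> hA hB hC t01; rewrite ge_min (hdist_set_segment_le hA hB hC t01).
Qed.

(* Since cosh^2 = 1 + sinh^2, this says that sinh^2 of the distance from [A]
   to every point of the geodesic segment [B, C] is at least [k]. *)
Definition segment_sinh2_ge (k : R) A B C :=
  forall t, 0 <= t <= 1 ->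
    (1 + k) * (ldot A A * ldot (seg B C t) (seg B C t)) <= ldot A (seg B C t) ^+ 2.

Lemma segment_sinh2_ge_height A B C (s : R) : in_disk A -> in_disk B -> in_disk C ->
  0 <= s -> s <= (expR (height A B C) - 1) / 2 -> segment_sinh2_ge (s ^+ 2) A B C.
Proof.
move=> hA hB hC s0 sh t t01; apply: ldot_sqr_ge_hdist => //.
  exact: in_disk_segment.
by apply: (le_trans sh); rewrite ler_pM2r // lerD2r ler_expR height_le_hdist.
Qed.

End Distance.

Section LineDistance.
Variable R : realType.
Implicit Types A B C X : pt R.

(* sinh^2 of the distance from [A] to the geodesic line through [B] and [C] is
   [det3 A B C ^+ 2 / (ldot A A * lgram B C)]. *)
Definition line_sinh2_ge (k : R) A B C := k * (ldot A A * lgram B C) <= det3 A B C ^+ 2.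

Lemma det3_sqr_gt0 A B C : det3 A B C != 0 -> 0 < det3 A B C ^+ 2.
Proof. by move=> hD; rewrite lt_neqAle sqr_ge0 andbT eq_sym sqrf_eq0. Qed.

Lemma line_sinh2_ge_le A B C (k k' : R) : in_disk A -> in_disk B -> in_disk C ->
  k' <= k -> line_sinh2_ge k A B C -> line_sinh2_ge k' A B C.
Proof.
move=> hA hB hC kk; apply: le_trans; rewrite ler_wpM2r // mulr_ge0 ?lgram_ge0 //.
by rewrite ltW // -in_diskE.
Qed.

(* The two hypotheses on the Lorentzian products say that the angles at [B] and
   [C] are not obtuse, so that the foot of the perpendicular from [A] lies on [B, C]:
   it is the point [(bt B + gm C) / (bt + gm)] below. *)
Lemma line_sinh2_ge_foot A B C (k : R) :
  in_disk A -> in_disk B -> in_disk C -> det3 A B C != 0 ->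
  ldot A B * ldot C C <= ldot B C * ldot C A ->
  ldot C A * ldot B B <= ldot B C * ldot A B ->
  segment_sinh2_ge k A B C -> line_sinh2_ge k A B C.
Proof.
move=> hA hB hC hD hbt hgm hseg.
have L0 := lgram_ge0 hB hC; have A0 : 0 < ldot A A by rewrite -in_diskE.
set bt := ldot B C * ldot C A - ldot A B * ldot C C.
set gm := ldot B C * ldot A B - ldot C A * ldot B B.
set Phi := bt * ldot A B + gm * ldot C A.
have ePhi : Phi = ldot A A * lgram B C + det3 A B C ^+ 2.
  by rewrite /Phi /bt /gm /lgram /ldot /det3 /dot; ring.
have Phi0 : 0 < Phi.
  by rewrite ePhi; have := det3_sqr_gt0 hD; have := mulr_ge0 (ltW A0) L0; lra.
have bt0 : 0 <= bt by rewrite subr_ge0.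
have gm0 : 0 <= gm by rewrite subr_ge0.
have S0 : 0 < bt + gm.
  rewrite lt_neqAle addr_ge0 // andbT; apply/eqP => S0.
  have [b0 g0] : bt = 0 /\ gm = 0 by lra.
  by move: Phi0; rewrite /Phi b0 g0 !mul0r addr0 ltxx.
pose t := bt / (bt + gm).
have t01 : 0 <= t <= 1.
  by rewrite divr_ge0 ?ler_pdivrMr ?mul1r ?lerDl // ltW.
have eAX : ldot A (seg B C t) = Phi / (bt + gm).
  by rewrite /Phi /t /ldot /comb3 /dot /=; field; rewrite gt_eqF.
have eXX : ldot (seg B C t) (seg B C t) = Phi * lgram B C / (bt + gm) ^+ 2.
  by rewrite /Phi /t /bt /gm /lgram /ldot /comb3 /dot /=; field; rewrite gt_eqF.
have hX : (1 + k) * (ldot A A * (Phi * lgram B C)) <= Phi ^+ 2.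
  have := hseg t t01; rewrite eAX eXX expr_div_n !mulrA ler_pM2r //.
  by rewrite invr_gt0 exprn_gt0.
have : (1 + k) * (ldot A A * lgram B C) <= Phi.
  by rewrite -(ler_pM2r Phi0) -expr2; apply: le_trans hX; rewrite le_eqVlt; apply/orP; left; apply/eqP; ring.
by rewrite /line_sinh2_ge ePhi; lra.
Qed.

(* The hypotheses say that [B, C] is a longest side: cosh^2 of the side opposite to
   [X] is proportional to [ldot Y Z ^+ 2 * ldot X X]. *)
Lemma line_sinh2_ge_longest A B C (k : R) : 0 <= k ->
  in_disk A -> in_disk B -> in_disk C -> det3 A B C != 0 ->
  ldot C A ^+ 2 * ldot B B <= ldot B C ^+ 2 * ldot A A ->
  ldot A B ^+ 2 * ldot C C <= ldot B C ^+ 2 * ldot A A ->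
  segment_sinh2_ge k A B C ->
  [/\ line_sinh2_ge k A B C, line_sinh2_ge k B C A & line_sinh2_ge k C A B].
Proof.
move=> k0 hA hB hC hD hCA hAB hseg.
have sA : 0 < ldot A A by rewrite -in_diskE.
have sB : 0 < ldot B B by rewrite -in_diskE.
have sC : 0 < ldot C C by rewrite -in_diskE.
have gAB := ldot_gt0 hA hB; have gBC := ldot_gt0 hB hC; have gCA := ldot_gt0 hC hA.
have lCA : ldot C C * ldot A A <= ldot C A ^+ 2 by rewrite -subr_ge0 lgram_ge0.
have lAB : ldot A A * ldot B B <= ldot A B ^+ 2 by rewrite -subr_ge0 lgram_ge0.
have hbt : ldot A B * ldot C C <= ldot B C * ldot C A.
  rewrite -ler_sqr ?nnegrE ?(ltW (mulr_gt0 gAB sC)) ?(ltW (mulr_gt0 gBC gCA)) // !exprMn.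
  have := ler_wpM2r (ltW sC) hAB; have := ler_wpM2l (sqr_ge0 (ldot B C)) lCA; nra.
have hgm : ldot C A * ldot B B <= ldot B C * ldot A B.
  rewrite -ler_sqr ?nnegrE ?(ltW (mulr_gt0 gCA sB)) ?(ltW (mulr_gt0 gBC gAB)) // !exprMn.
  have := ler_wpM2r (ltW sB) hCA; have := ler_wpM2l (sqr_ge0 (ldot B C)) lAB; nra.
have hlA := line_sinh2_ge_foot hA hB hC hD hbt hgm hseg.
split=> //; rewrite /line_sinh2_ge; [rewrite det3_rot | rewrite -det3_rot];
  apply: le_trans hlA; rewrite ler_wpM2l // /lgram; lra.
Qed.

Lemma line_sinh2_ge_all A B C (k : R) : 0 <= k ->
  in_disk A -> in_disk B -> in_disk C -> det3 A B C != 0 ->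
  segment_sinh2_ge k A B C -> segment_sinh2_ge k B C A -> segment_sinh2_ge k C A B ->
  [/\ line_sinh2_ge k A B C, line_sinh2_ge k B C A & line_sinh2_ge k C A B].
Proof.
move=> k0 hA hB hC hD hsA hsB hsC.
have hDB : det3 B C A != 0 by rewrite det3_rot.
have hDC : det3 C A B != 0 by rewrite -det3_rot.
set qA := ldot B C ^+ 2 * ldot A A; set qB := ldot C A ^+ 2 * ldot B B.
set qC := ldot A B ^+ 2 * ldot C C.
have [qBA | qAB] := lerP qB qA; [have [qCA | qAC] := lerP qC qA | have [qCB | qBC] := lerP qC qB].
- exact: line_sinh2_ge_longest.
- have [? ? ?] := line_sinh2_ge_longest k0 hC hA hB hDC (ltW qAC) (ltW (le_lt_trans qBA qAC)) hsC.
  by split.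
- have [? ? ?] := line_sinh2_ge_longest k0 hB hC hA hDB qCB (ltW qAB) hsB.
  by split.
- have [? ? ?] := line_sinh2_ge_longest k0 hC hA hB hDC (ltW (lt_trans qAB qBC)) (ltW qBC) hsC.
  by split.
Qed.

End LineDistance.

Section GramInequality.
Variable R : realFieldType.
Implicit Types x y z k : R.

(* For the hyperbolic cosines [x, y, z] of the sides of a triangle, [gram x y z] is
   the Gram determinant of its vertices and [gram x y z / (x ^+ 2 - 1)] is sinh^2 of
   the height onto the side of cosh [x]. *)
Definition gram x y z := 1 + 2 * x * y * z - x ^+ 2 - y ^+ 2 - z ^+ 2.

Lemma gram_gt0_le_2mul x y z : 1 <= x -> 1 <= y -> 1 <= z -> 0 < gram x y z ->
  x <= 2 * y * z.
Proof.
rewrite /gram => x1 y1 z1 hD; rewrite leNgt; apply/negP => h.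
have : (x - y * z) ^+ 2 > y ^+ 2 * z ^+ 2 by nra.
nra.
Qed.

Lemma gram_sinh2_bound_yz x y z k : 1 <= x -> 1 <= y -> 1 <= z -> 0 <= k <= 1 ->
  0 < gram x y z -> k * (x ^+ 2 - 1) <= gram x y z -> k * (y ^+ 2 - 1) <= gram x y z ->
  k * (z ^+ 2 - 1) <= gram x y z ->
  k * (y * z * (x ^+ 2 - 1)) <= 2 * x * gram x y z.
Proof.
move=> x1 y1 z1 /andP[k0 k1]; set D := gram x y z => D0 hx hy hz.
have yz1 : 1 <= y * z by nra.
have [c1|c1] := lerP y (x * z); last first.
  have yy : y ^+ 2 >= y * (x * z) by nra.
  have : x * (y ^+ 2 - 1) * 2 - y * z * (x ^+ 2 - 1) >= 0 by nra.
  nra.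
have [c2|c2] := lerP z (x * y); last first.
  have zz : z ^+ 2 >= z * (x * y) by nra.
  have : x * (z ^+ 2 - 1) * 2 - y * z * (x ^+ 2 - 1) >= 0 by nra.
  nra.
have e : x * (x ^+ 2 - 1 + D) - y * z * (x ^+ 2 - 1) = (x * y - z) * (x * z - y).
  by rewrite /D /gram; ring.
have e2 : y * z * (x ^+ 2 - 1) <= x * (x ^+ 2 - 1 + D).
  by rewrite -subr_ge0 e; apply: mulr_ge0; lra.
have : k * (x ^+ 2 - 1 + D) <= 2 * D by nra.
nra.
Qed.

Lemma gram_sinh2_bound x y z k : 1 <= x -> 1 <= y -> 1 <= z -> 0 <= k <= 1 ->
  0 < gram x y z -> k * (x ^+ 2 - 1) <= gram x y z -> k * (y ^+ 2 - 1) <= gram x y z ->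
  k * (z ^+ 2 - 1) <= gram x y z ->
  k * (x ^+ 2 + y ^+ 2 + z ^+ 2 + 6 * x * y * z) * (x ^+ 2 - 1) <= 24 * x ^+ 2 * gram x y z.
Proof.
move=> x1 y1 z1 k01 D0 hx hy hz; have /andP[k0 k1] := k01.
have h := gram_sinh2_bound_yz x1 y1 z1 k01 D0 hx hy hz.
have ex := gram_gt0_le_2mul x1 y1 z1 D0.
have ey : y <= 2 * x * z.
  by apply: (gram_gt0_le_2mul y1 x1 z1); move: D0; rewrite /gram; lra.
have ez : z <= 2 * x * y.
  by apply: (gram_gt0_le_2mul z1 x1 y1); move: D0; rewrite /gram; lra.
have N : x ^+ 2 + y ^+ 2 + z ^+ 2 + 6 * x * y * z <= 12 * (x * y * z) by nra.
have x0 : 0 <= x ^+ 2 - 1 by nra.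
have : k * (x ^+ 2 + y ^+ 2 + z ^+ 2 + 6 * x * y * z) * (x ^+ 2 - 1) <=
   k * (12 * (x * y * z)) * (x ^+ 2 - 1).
  by apply: ler_wpM2r => //; apply: ler_wpM2l.
nra.
Qed.

End GramInequality.

Section Center.
Variable R : realType.
Implicit Types A B C P X Y : pt R.

Definition lcenter A B C : pt R :=
  let W := ldot B C + ldot C A + ldot A B in
  comb3 (ldot B C / W) (ldot C A / W) (ldot A B / W) A B C.

Lemma lcenter_rot A B C : lcenter B C A = lcenter A B C.
Proof.
rewrite /lcenter /comb3 /=.
have -> : ldot C A + ldot A B + ldot B C = ldot B C + ldot C A + ldot A B by ring.
by congr pair; ring.
Qed.

Section Weights.
Variables (A B C : pt R).
Hypotheses (hA : in_disk A) (hB : in_disk B) (hC : in_disk C).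
Let W := ldot B C + ldot C A + ldot A B.

Let W_gt0 : 0 < W.
Proof.
by have := ldot_gt0 hB hC; have := ldot_gt0 hC hA; have := ldot_gt0 hA hB; rewrite /W; lra.
Qed.

Let weights_sum1 : ldot B C / W + ldot C A / W + ldot A B / W = 1.
Proof. by rewrite -!mulrDl divff // gt_eqF. Qed.

Lemma det3_lcenter : det3 (lcenter A B C) B C = ldot B C / W * det3 A B C.
Proof. exact: det3_comb3 weights_sum1. Qed.

Lemma ldot_lcenter : ldot (lcenter A B C) (lcenter A B C) =
  (ldot A A * ldot B C ^+ 2 + ldot B B * ldot C A ^+ 2 + ldot C C * ldot A B ^+ 2
   + 6 * ldot B C * ldot C A * ldot A B) / W ^+ 2.
Proof.
rewrite /lcenter -/W ldot_comb3 //.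
by field; rewrite gt_eqF.
Qed.

End Weights.

Lemma in_disk_lcenter A B C : in_disk A -> in_disk B -> in_disk C -> in_disk (lcenter A B C).
Proof.
move=> hA hB hC; have gAB := ldot_gt0 hA hB; have gBC := ldot_gt0 hB hC.
have gCA := ldot_gt0 hC hA; have sA : 0 < ldot A A by rewrite -in_diskE.
have sB : 0 < ldot B B by rewrite -in_diskE.
have sC : 0 < ldot C C by rewrite -in_diskE.
apply/in_diskE; rewrite ldot_lcenter // divr_gt0 ?exprn_gt0 //; last by lra.
by rewrite !addr_gt0 ?mulr_gt0 ?exprn_gt0.
Qed.

Lemma lcenter_det3_gt0 A B C : in_disk A -> in_disk B -> in_disk C -> det3 A B C != 0 ->
  0 < det3 (lcenter A B C) B C / det3 A B C.
Proof.
move=> hA hB hC hD; rewrite det3_lcenter // mulfK // divr_gt0 ?ldot_gt0 //.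
by have := ldot_gt0 hA hB; have := ldot_gt0 hB hC; have := ldot_gt0 hC hA; lra.
Qed.

Section Cosines.
Variables (A B C : pt R) (a b c : R).
Hypotheses (a0 : 0 < a) (b0 : 0 < b) (c0 : 0 < c).
Hypotheses (ea : a ^+ 2 = ldot A A) (eb : b ^+ 2 = ldot B B) (ec : c ^+ 2 = ldot C C).
Let x := ldot B C / (b * c).
Let y := ldot C A / (c * a).
Let z := ldot A B / (a * b).

Lemma gram_ldot : gram x y z * (a ^+ 2 * b ^+ 2 * c ^+ 2) = det3 A B C ^+ 2.
Proof.
rewrite det3_sqr -ea -eb -ec /x /y /z /gram.
by field; rewrite !gt_eqF.
Qed.

Lemma line_sinh2_ge_gram k : line_sinh2_ge k A B C -> k * (x ^+ 2 - 1) <= gram x y z.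
Proof.
have K0 : 0 < a ^+ 2 * b ^+ 2 * c ^+ 2 by rewrite !mulr_gt0 ?exprn_gt0.
rewrite -(ler_pM2r K0) gram_ldot => hl; apply: le_trans hl; rewrite le_eqVlt; apply/orP; left.
by apply/eqP; rewrite /lgram -ea -eb -ec /x; field; rewrite !gt_eqF.
Qed.

End Cosines.

Lemma gram_rot (x y z : R) : gram y z x = gram x y z.
Proof. by rewrite /gram; ring. Qed.

(* The proof passes to the hyperbolic cosines [x, y, z] of the sides, where the
   statement becomes [gram_sinh2_bound]. *)
Lemma line_sinh2_ge_lcenter A B C (k : R) : 0 <= k <= 1 ->
  in_disk A -> in_disk B -> in_disk C -> det3 A B C != 0 ->
  line_sinh2_ge k A B C -> line_sinh2_ge k B C A -> line_sinh2_ge k C A B ->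
  line_sinh2_ge (k / 24) (lcenter A B C) B C.
Proof.
move=> k01 hA hB hC hD hlA hlB hlC.
have sqrt_gt0 X : in_disk X -> 0 < Num.sqrt (ldot X X) by rewrite sqrtr_gt0 -in_diskE.
have sqrtK X : in_disk X -> Num.sqrt (ldot X X) ^+ 2 = ldot X X.
  by move=> hX; rewrite sqr_sqrtr // ltW // -in_diskE.
have cosh_ge1 X Y : in_disk X -> in_disk Y ->
    1 <= ldot X Y / (Num.sqrt (ldot X X) * Num.sqrt (ldot Y Y)).
  move=> hX hY; rewrite ler_pdivlMr ?mulr_gt0 ?sqrt_gt0 // mul1r -sqrtrM.
    exact: sqrt_ldot_le.
  by rewrite ltW // -in_diskE.
set a := Num.sqrt (ldot A A); set b := Num.sqrt (ldot B B); set c := Num.sqrt (ldot C C).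
have a0 : 0 < a := sqrt_gt0 _ hA; have b0 : 0 < b := sqrt_gt0 _ hB.
have c0 : 0 < c := sqrt_gt0 _ hC.
have ea : a ^+ 2 = ldot A A := sqrtK _ hA; have eb : b ^+ 2 = ldot B B := sqrtK _ hB.
have ec : c ^+ 2 = ldot C C := sqrtK _ hC.
set x := ldot B C / (b * c); set y := ldot C A / (c * a); set z := ldot A B / (a * b).
have x1 : 1 <= x := cosh_ge1 _ _ hB hC; have y1 : 1 <= y := cosh_ge1 _ _ hC hA.
have z1 : 1 <= z := cosh_ge1 _ _ hA hB.
have eD := gram_ldot a0 b0 c0 ea eb ec.
have D0 : 0 < gram x y z.
  by rewrite -(@pmulr_lgt0 _ (a ^+ 2 * b ^+ 2 * c ^+ 2)) ?eD ?det3_sqr_gt0 ?mulr_gt0 ?exprn_gt0.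
have hx := line_sinh2_ge_gram a0 b0 c0 ea eb ec hlA.
have := line_sinh2_ge_gram b0 c0 a0 eb ec ea hlB; rewrite gram_rot => hy.
have := line_sinh2_ge_gram c0 a0 b0 ec ea eb hlC; rewrite -gram_rot => hz.
have := gram_sinh2_bound x1 y1 z1 k01 D0 hx hy hz.
set W := ldot B C + ldot C A + ldot A B.
have W0 : 0 < W.
  by have := ldot_gt0 hB hC; have := ldot_gt0 hC hA; have := ldot_gt0 hA hB; rewrite /W; lra.
pose M := a ^+ 2 * b ^+ 2 * c ^+ 2 * (b ^+ 2 * c ^+ 2) / (24 * W ^+ 2).
have M0 : 0 < M by rewrite /M divr_gt0 ?mulr_gt0 ?exprn_gt0.
rewrite /line_sinh2_ge ldot_lcenter // det3_lcenter // -/W.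
rewrite (_ : k / 24 * _ = k * (x ^+ 2 + y ^+ 2 + z ^+ 2 + 6 * x * y * z) * (x ^+ 2 - 1) * M).
  rewrite (_ : (ldot B C / W * det3 A B C) ^+ 2 = 24 * x ^+ 2 * gram x y z * M).
    by rewrite ler_pM2r.
  by rewrite exprMn -eD /x /M; field; rewrite !gt_eqF.
by rewrite /lgram -ea -eb -ec /x /y /z /M; field; rewrite !gt_eqF.
Qed.

End Center.

Section Shift.
Variable R : realType.
Implicit Types A B C P X : pt R.

(* The displacement [a (e1 - P.1 P) + b e2] of [P]: its two directions are orthogonal
   for the Klein metric at [P], with squared lengths [Q / s] and [Q / s ^+ 2], where
   [s = ldot P P] and [Q = 1 - P.1 ^+ 2]. *)
Definition kshift P (a b : R) : pt R :=
  (P.1 + a * (1 - P.1 ^+ 2), P.2 - a * P.1 * P.2 + b).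

(* Both components of the displacement have Klein length at most [eps / sqrt 2]. *)
Definition small_shift (eps : R) P (a b : R) :=
  2 * a ^+ 2 * (1 - P.1 ^+ 2) <= eps ^+ 2 * ldot P P /\
  2 * b ^+ 2 * (1 - P.1 ^+ 2) <= eps ^+ 2 * ldot P P ^+ 2.

Section SmallShift.
Variables (P : pt R) (eps a b : R).
Hypotheses (hP : in_disk P) (eps01 : 0 <= eps <= 1 / 10) (hab : small_shift eps P a b).
Let s := ldot P P.
Let Q := 1 - P.1 ^+ 2.

Let s_gt0 : 0 < s. Proof. by rewrite -in_diskE. Qed.

Let eQ : Q = s + P.2 ^+ 2.
Proof. by rewrite /Q /s /ldot /dot; ring. Qed.

Let s_le_Q : s <= Q.
Proof. by rewrite eQ lerDl sqr_ge0. Qed.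

Let P1_sqr_le1 : P.1 ^+ 2 <= 1.
Proof. by rewrite -subr_ge0 -/Q; apply: le_trans s_le_Q; exact: ltW. Qed.

(* The left-hand side is the square of the Euclidean product of [P] with the
   displacement. *)
Lemma small_shift_radial : (a * P.1 * s + b * P.2) ^+ 2 <= eps ^+ 2 * s ^+ 2.
Proof.
have [ha hb] := hab; rewrite -/s -/Q in ha hb.
have Q0 : 0 < Q by apply: lt_le_trans s_le_Q.
rewrite -(ler_pM2l Q0); apply: le_trans (ler_wpM2l (ltW Q0) (sqrD_le2 _ _)) _.
have : 2 * a ^+ 2 * Q * (P.1 ^+ 2 * s ^+ 2) <= eps ^+ 2 * s * (P.1 ^+ 2 * s ^+ 2).
  by rewrite ler_wpM2r // mulr_ge0 ?sqr_ge0.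
have : 2 * b ^+ 2 * Q * P.2 ^+ 2 <= eps ^+ 2 * s ^+ 2 * P.2 ^+ 2.
  by rewrite ler_wpM2r ?sqr_ge0.
have : eps ^+ 2 * s * (P.1 ^+ 2 * s ^+ 2) <= eps ^+ 2 * s * s ^+ 2.
  apply: ler_wpM2l; first by rewrite mulr_ge0 ?sqr_ge0 // ltW.
  by apply: ler_piMl; [exact: sqr_ge0 | exact: P1_sqr_le1].
rewrite eQ; nra.
Qed.

Lemma ldot_kshift_bounds :
  0 < ldot (kshift P a b) (kshift P a b) <= 2 * ldot P P.
Proof.
have [ha hb] := hab; rewrite -/s -/Q in ha hb; have /andP[e0 e1] := eps01.
have Q0 : 0 < Q by apply: lt_le_trans s_le_Q.
set PV := a * P.1 * s + b * P.2.
set VV := (a * Q) ^+ 2 + (- (a * P.1 * P.2) + b) ^+ 2.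
have -> : ldot (kshift P a b) (kshift P a b) = s - 2 * PV - VV.
  by rewrite /PV /VV /s /Q /ldot /dot /kshift /=; ring.
have /andP[PV1 PV2] : - (eps * s) <= PV <= eps * s.
  rewrite -ler_norml; apply: norm_le_of_sqr; first by rewrite mulr_ge0 // ltW.
  by rewrite exprMn small_shift_radial.
have hVV : VV <= 2 * eps ^+ 2 * s.
  have h1 := sqrD_le2 (- (a * P.1 * P.2)) b; rewrite sqrrN in h1.
  have eQ2 : Q ^+ 2 + (P.1 * P.2) ^+ 2 = Q - s * P.1 ^+ 2 by rewrite eQ /s /ldot /dot; ring.
  have : a ^+ 2 * (Q ^+ 2 + (P.1 * P.2) ^+ 2) <= a ^+ 2 * Q.
    by rewrite eQ2 ler_wpM2l ?sqr_ge0 // gerDl oppr_le0 mulr_ge0 ?sqr_ge0 ?(ltW s_gt0).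
  have : 2 * b ^+ 2 <= eps ^+ 2 * s.
    rewrite -(ler_pM2r Q0); apply: le_trans hb _.
    by rewrite expr2 mulrA ler_wpM2l // mulr_ge0 ?sqr_ge0 ?(ltW s_gt0).
  rewrite /VV; have : 0 <= (a * Q) ^+ 2 by exact: sqr_ge0.
  nra.
have s0 := s_gt0; have h1 : eps ^+ 2 <= eps / 10 by nra.
have h2 : eps * s <= s / 10 by nra.
have VV0 : 0 <= VV by rewrite /VV addr_ge0 ?sqr_ge0.
rewrite -/s; apply/andP; split; nra.
Qed.

(* With [E := det3 P B C], the difference below times [s] is [U - E * PV]; the
   identity [s * L1 ^+ 2 + L2 ^+ 2 = Q * (s * lgram B C + E ^+ 2)] bounds [U], and the
   distance from [P] to the line [B C] makes this bound at most [s * (1 - eps) * |E|]. *)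
Lemma det3_kshift_near B C : line_sinh2_ge (2 * eps ^+ 2) P B C ->
  `|det3 (kshift P a b) B C - det3 P B C| <= `|det3 P B C|.
Proof.
have [ha hb] := hab; rewrite -/s -/Q in ha hb; have /andP[e0 e1] := eps01.
have s0 := s_gt0; have Q0 : 0 < Q by apply: lt_le_trans s_le_Q.
rewrite /line_sinh2_ge -/s => hl.
set E := det3 P B C in hl *; set PV := a * P.1 * s + b * P.2.
set L1 := Q * (B.2 - C.2) + P.1 * P.2 * (B.1 - C.1) + E * P.1.
set L2 := E * P.2 - s * (B.1 - C.1).
set U := s * a * L1 + b * L2.
have eU : s * (det3 (kshift P a b) B C - E) = U - E * PV.
  by rewrite /U /L1 /L2 /PV /E /s /Q /det3 /kshift /ldot /dot /=; ring.
have hU : U ^+ 2 <= eps ^+ 2 * s ^+ 2 * (s * lgram B C + E ^+ 2).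
  rewrite -(ler_pM2l Q0); apply: le_trans (ler_wpM2l (ltW Q0) (sqrD_le2 _ _)) _.
  have -> : Q * (eps ^+ 2 * s ^+ 2 * (s * lgram B C + E ^+ 2)) =
      eps ^+ 2 * s ^+ 2 * (s * L1 ^+ 2 + L2 ^+ 2).
    by rewrite /L1 /L2 /E /s /Q /lgram /det3 /ldot /dot; ring.
  have : 2 * a ^+ 2 * Q * (s ^+ 2 * L1 ^+ 2) <= eps ^+ 2 * s * (s ^+ 2 * L1 ^+ 2).
    by rewrite ler_wpM2r // mulr_ge0 ?sqr_ge0.
  have : 2 * b ^+ 2 * Q * L2 ^+ 2 <= eps ^+ 2 * s ^+ 2 * L2 ^+ 2.
    by rewrite ler_wpM2r ?sqr_ge0.
  nra.
have hE : eps ^+ 2 * (s * lgram B C + E ^+ 2) <= (1 - eps) ^+ 2 * E ^+ 2.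
  have : 0 <= (1 / 2 - 2 * eps) * E ^+ 2 by rewrite mulr_ge0 ?sqr_ge0 //; lra.
  nra.
have hUE : `|U| <= s * (1 - eps) * `|E|.
  apply: norm_le_of_sqr; first by rewrite !mulr_ge0 ?normr_ge0 ?subr_ge0 // ?ltW //; lra.
  rewrite !exprMn real_normK ?num_real //; apply: le_trans hU _.
  by have := ler_wpM2l (sqr_ge0 s) hE; nra.
have hPV : `|E * PV| <= eps * s * `|E|.
  rewrite normrM mulrC ler_wpM2r ?normr_ge0 //; apply: norm_le_of_sqr.
    by rewrite mulr_ge0 // ltW.
  by rewrite exprMn small_shift_radial.
rewrite -(ler_pM2l s0) -{1}(gtr0_norm s0) -normrM eU.
by apply: le_trans (ler_normB _ _) _; lra.
Qed.

End SmallShift.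

End Shift.

Section InTriangle.
Variable R : realType.
Implicit Types A B C P X : pt R.

(* Cramer's rule: the barycentric coordinates of [X] are ratios of [det3]'s. *)
Lemma htriangle_det3 A B C X : det3 A B C != 0 ->
  0 <= det3 X B C / det3 A B C -> 0 <= det3 X C A / det3 A B C ->
  0 <= det3 X A B / det3 A B C -> htriangle A B C X.
Proof.
move=> hD h1 h2 h3; exists (det3 X B C / det3 A B C), (det3 X C A / det3 A B C),
  (det3 X A B / det3 A B C); split => //.
  by rewrite /det3; field.
by case: X {h1 h2 h3} => x1 x2; rewrite /comb3 /det3 /=; congr pair; field.
Qed.

Lemma kshift_in_htriangle A B C P (eps a b : R) :
  det3 A B C != 0 -> in_disk P -> 0 <= eps <= 1 / 10 -> small_shift eps P a b ->
  0 < det3 P B C / det3 A B C -> 0 < det3 P C A / det3 A B C ->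
  0 < det3 P A B / det3 A B C ->
  line_sinh2_ge (2 * eps ^+ 2) P B C -> line_sinh2_ge (2 * eps ^+ 2) P C A ->
  line_sinh2_ge (2 * eps ^+ 2) P A B -> htriangle A B C (kshift P a b).
Proof.
move=> hD hP eps01 hab hA hB hC lA lB lC.
apply: htriangle_det3 => //.
- exact: (div_ge0_near hA (det3_kshift_near hP eps01 hab lA)).
- exact: (div_ge0_near hB (det3_kshift_near hP eps01 hab lB)).
- exact: (div_ge0_near hC (det3_kshift_near hP eps01 hab lC)).
Qed.

End InTriangle.

Section Area.
Variable R : realType.
Implicit Types A B C P X : pt R.

Lemma area_density_ge0 X : 0 <= area_density X.
Proof. by rewrite invr_ge0 exprn_ge0 ?sqrtr_ge0. Qed.

Lemma area_density_ge X (s : R) : 0 < ldot X X -> ldot X X <= 2 * s ->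
  (Num.sqrt (2 * s) ^+ 3)^-1 <= area_density X.
Proof.
move=> h1 h2; rewrite /area_density -/(ldot X X).
have le : Num.sqrt (ldot X X) <= Num.sqrt (2 * s) by rewrite ler_sqrt // (le_trans (ltW h1)).
have q0 : 0 < Num.sqrt (ldot X X) by rewrite sqrtr_gt0.
have z0 : 0 < Num.sqrt (2 * s) by apply: lt_le_trans le.
rewrite lef_pV2 ?posrE ?exprn_gt0 //.
by rewrite lerXn2r ?nnegrE ?(ltW q0) ?(ltW z0).
Qed.

(* In the coordinates [(a, b)] of [kshift P a b], this is the rectangle allowed by
   [small_shift]. *)
Definition kbox P (eps : R) : set (pt R) :=
  let Q := 1 - P.1 ^+ 2 in let r := Num.sqrt (2 * Q) in let k := - (P.1 * P.2) / Q in
  parallelogram P.1 (eps * Num.sqrt (ldot P P) * Q / r) k (P.2 - k * P.1) (eps * ldot P P / r).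

Lemma measurable_kbox P (eps : R) : measurable (kbox P eps).
Proof. exact: measurable_parallelogram. Qed.

Section Box.
Variables (P : pt R) (eps : R).
Hypotheses (hP : in_disk P) (eps0 : 0 < eps).
Let s := ldot P P.
Let Q := 1 - P.1 ^+ 2.
Let q := Num.sqrt s.
Let r := Num.sqrt (2 * Q).

Let s_gt0 : 0 < s. Proof. by rewrite -in_diskE. Qed.
Let Q_gt0 : 0 < Q.
Proof. by apply: (lt_le_trans s_gt0); rewrite /Q /s /ldot /dot -subr_ge0; have := sqr_ge0 P.2; lra. Qed.
Let q_gt0 : 0 < q. Proof. by rewrite sqrtr_gt0. Qed.
Let r_gt0 : 0 < r. Proof. by rewrite sqrtr_gt0 mulr_gt0. Qed.
Let q2 : q ^+ 2 = s. Proof. by rewrite sqr_sqrtr // ltW. Qed.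
Let r2 : r ^+ 2 = 2 * Q. Proof. by rewrite sqr_sqrtr // mulr_ge0 // ltW. Qed.

Lemma kbox_kshift X : kbox P eps X -> exists a b, small_shift eps P a b /\ X = kshift P a b.
Proof.
have Qn := gt_eqF Q_gt0; have rn := gt_eqF r_gt0.
case: X => x y; rewrite /kbox -/Q -/r /parallelogram /= => -[/andP[x1 x2] /andP[y1 y2]].
set k := - (P.1 * P.2) / Q in y1 y2; rewrite -/s -/q in x1 x2 y1 y2.
have /sqr_le_of_norm hx : `|x - P.1| <= eps * q * Q / r by rewrite ler_norml; lra.
have /sqr_le_of_norm hy : `|y - P.2 - k * (x - P.1)| <= eps * s / r.
  by rewrite ler_norml; lra.
exists ((x - P.1) / Q), (y - P.2 - k * (x - P.1)); split; last first.
  by rewrite /kshift /k -/Q /=; congr pair; field; rewrite Qn.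
split; rewrite -/s -/Q.
  rewrite (_ : _ * Q = (x - P.1) ^+ 2 * (2 / Q)); last by field; rewrite Qn.
  rewrite (_ : _ * s = (eps * q * Q / r) ^+ 2 * (2 / Q)); last first.
    by rewrite !exprMn exprVn q2 r2; field; rewrite ?Qn ?rn.
  by rewrite ler_wpM2r // divr_ge0 // ltW.
rewrite (_ : _ * Q = (y - P.2 - k * (x - P.1)) ^+ 2 * (2 * Q)); last by ring.
rewrite (_ : eps ^+ 2 * s ^+ 2 = (eps * s / r) ^+ 2 * (2 * Q)); last first.
  by rewrite !exprMn exprVn r2; field; rewrite ?Qn ?rn.
by rewrite ler_wpM2r // mulr_ge0 // ltW.
Qed.

Lemma kbox_measure :
  ((2 * eps ^+ 2 * s * q)%:E <= ((@lebesgue_measure R) \x (@lebesgue_measure R))%E (kbox P eps))%E.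
Proof.
have w0 : 0 < eps * q * Q / r by rewrite divr_gt0 ?mulr_gt0.
have b0 : 0 < eps * s / r by rewrite divr_gt0 ?mulr_gt0.
apply: le_trans (parallelogram_measure _ _ _ w0 b0); rewrite lee_fin le_eqVlt; apply/orP; left.
have -> : 2 * (eps * s / r) * (2 * (eps * q * Q / r)) = 4 * eps ^+ 2 * s * q * Q / r ^+ 2.
  by field; rewrite gt_eqF.
by rewrite r2; apply/eqP; field; rewrite gt_eqF.
Qed.

Lemma harea_ge_small_shifts (S : set (pt R)) : eps <= 1 / 10 ->
  (forall a b, small_shift eps P a b -> S (kshift P a b)) -> ((eps ^+ 2 / 2)%:E <= harea S)%E.
Proof.
move=> eps1 hS; have eps01 : 0 <= eps <= 1 / 10 by rewrite eps1 ltW.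
set z := Num.sqrt (2 * s).
have z0 : 0 < z by rewrite sqrtr_gt0 mulr_gt0.
have z2 : z ^+ 2 = 2 * s by rewrite sqr_sqrtr // mulr_ge0 // ltW.
have m0 : 0 <= (z ^+ 3)^-1 by rewrite invr_ge0 exprn_ge0 // ltW.
have hbox X : kbox P eps X -> S X /\ ((z ^+ 3)^-1%:E <= (area_density X)%:E)%E.
  move=> /kbox_kshift[a [b [hab ->]]]; split; first exact: hS.
  have /andP[h1 h2] := ldot_kshift_bounds hP eps01 hab.
  by rewrite lee_fin area_density_ge.
have f0 X : (0 <= (area_density X)%:E)%E by rewrite lee_fin area_density_ge0.
rewrite /harea; apply: le_trans _ (cst_mul_measure_le_integral
  ((@lebesgue_measure R) \x (@lebesgue_measure R))%E (measurable_kbox P eps) m0 f0 hbox).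
apply: le_trans _ (lee_wpmul2l _ kbox_measure); last by rewrite lee_fin.
rewrite -EFinM lee_fin.
have -> : (z ^+ 3)^-1 * (2 * eps ^+ 2 * s * q) = eps ^+ 2 * q / z.
  by rewrite exprSr z2; field; rewrite !gt_eqF.
have zq : z <= 2 * q.
  rewrite -ler_sqr ?nnegrE ?mulr_ge0 ?(ltW z0) ?(ltW q_gt0) // exprMn q2 z2.
  by have := s_gt0; lra.
rewrite -subr_ge0 (_ : _ - _ = eps ^+ 2 * (2 * q - z) / (2 * z)); last first.
  by field; rewrite gt_eqF.
by rewrite divr_ge0 ?mulr_ge0 ?sqr_ge0 ?subr_ge0 // ltW.
Qed.

End Box.
End Area.

Lemma harea_htriangle_ge (R : realType) (A B C : pt R) (s : R) :
  in_disk A -> in_disk B -> in_disk C -> det3 A B C != 0 -> 0 <= s <= 1 ->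
  segment_sinh2_ge (s ^+ 2) A B C -> segment_sinh2_ge (s ^+ 2) B C A ->
  segment_sinh2_ge (s ^+ 2) C A B -> ((s ^+ 2 / 200)%:E <= harea (htriangle A B C))%E.
Proof.
move=> hA hB hC hD /andP[s0 s1] hsA hsB hsC.
have [-> | sn0] := eqVneq s 0.
  by rewrite expr0n mul0r; apply: integral_ge0 => X _; rewrite lee_fin area_density_ge0.
have DB : det3 B C A = det3 A B C by rewrite det3_rot.
have DC : det3 C A B = det3 A B C by rewrite -det3_rot.
have hDB : det3 B C A != 0 by rewrite DB.
have hDC : det3 C A B != 0 by rewrite DC.
have k01 : 0 <= s ^+ 2 <= 1 by rewrite sqr_ge0 expr_le1.
have [lA lB lC] := line_sinh2_ge_all (sqr_ge0 s) hA hB hC hD hsA hsB hsC.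
pose eps := s / 10; pose P := lcenter A B C.
have PB : lcenter B C A = P by rewrite lcenter_rot.
have PC : lcenter C A B = P by rewrite lcenter_rot lcenter_rot.
have eps0 : 0 < eps by rewrite divr_gt0 // lt_neqAle eq_sym sn0.
have eps01 : 0 <= eps <= 1 / 10 by apply/andP; split; rewrite /eps; lra.
have hk : 2 * eps ^+ 2 <= s ^+ 2 / 24 by rewrite /eps; nra.
have hP : in_disk P := in_disk_lcenter hA hB hC.
have fA : line_sinh2_ge (2 * eps ^+ 2) P B C.
  exact: line_sinh2_ge_le hP hB hC hk (line_sinh2_ge_lcenter k01 hA hB hC hD lA lB lC).
have fB : line_sinh2_ge (2 * eps ^+ 2) P C A.
  by rewrite -PB; apply: line_sinh2_ge_le (line_sinh2_ge_lcenter k01 hB hC hA hDB lB lC lA);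
    rewrite ?PB.
have fC : line_sinh2_ge (2 * eps ^+ 2) P A B.
  by rewrite -PC; apply: line_sinh2_ge_le (line_sinh2_ge_lcenter k01 hC hA hB hDC lC lA lB);
    rewrite ?PC.
have rA := lcenter_det3_gt0 hA hB hC hD.
have := lcenter_det3_gt0 hB hC hA hDB; rewrite PB DB => rB.
have := lcenter_det3_gt0 hC hA hB hDC; rewrite PC DC => rC.
have := harea_ge_small_shifts hP eps0 (andP eps01).2
  (fun a b hab => kshift_in_htriangle hD hP eps01 hab rA rB rC fA fB fC).
by rewrite /eps (_ : (s / 10) ^+ 2 / 2 = s ^+ 2 / 200) //; field.
Qed.

Lemma min1_sqr_le_expR (R : realType) (h : R) : 0 <= h ->
  Num.min 1 (h ^+ 2) <= 4 * Num.min 1 ((expR h - 1) / 2) ^+ 2.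
Proof.
move=> h0; have := expR_ge1Dx h => eh.
have hh : h ^+ 2 <= (expR h - 1) ^+ 2 by rewrite lerXn2r ?nnegrE; lra.
by rewrite !minEle; case: ifP => [? | /negbT]; case: ifP => [? | /negbT]; rewrite -?ltNge; lra.
Qed.

Lemma harea_htriangle_height (R : realType) (A B C : pt R) :
  in_disk A -> in_disk B -> in_disk C -> det3 A B C != 0 ->
  ((Num.min 1 ((expR (height A B C) - 1) / 2) ^+ 2 / 200)%:E <= harea (htriangle A B C))%E.
Proof.
move=> hA hB hC hD; set s := Num.min 1 _.
have s01 : 0 <= s <= 1.
  rewrite /s ge_min lexx le_min ler01 /= andbT.
  by have := expR_ge1Dx (height A B C); have := height_ge0 hA hB hC; lra.
have sh : s <= (expR (height A B C) - 1) / 2 by rewrite /s ge_min lexx orbT.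
have hsB : s <= (expR (height B C A) - 1) / 2 by rewrite height_rot.
have hsC : s <= (expR (height C A B) - 1) / 2 by rewrite (@height_rot _ B C A) height_rot.
have s0 := (andP s01).1.
exact: (harea_htriangle_ge hA hB hC hD s01 (segment_sinh2_ge_height hA hB hC s0 sh)
  (segment_sinh2_ge_height hB hC hA s0 hsB) (segment_sinh2_ge_height hC hA hB s0 hsC)).
Qed.

Theorem lemma5 (R : realType) :
  exists c : R, 0 < c /\
    forall A B C : pt R,
      in_disk A -> in_disk B -> in_disk C -> noncollinear A B C ->
      ((c * Num.min 1 (height A B C ^+ 2))%:E <= harea (htriangle A B C))%E.
Proof.
exists (1 / 800); split=> [|A B C hA hB hC hN]; first lra.
have scale (x y : R) : x <= 4 * y ^+ 2 -> 1 / 800 * x <= y ^+ 2 / 200 by move=> ?; lra.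
apply: le_trans _ (harea_htriangle_height hA hB hC hN); rewrite lee_fin.
by apply: scale; apply: min1_sqr_le_expR; exact: height_ge0 hA hB hC.
Qed.
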